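(* Let $p$ be prime, $f\ge1$, let $r_0,\dots,r_{f-1}$ be integers in $[1,p]$, let $J\subset\{0,\dots,f-1\}$, and set $h_i=r_i$ if $i\in J$ and $h_i=0$ otherwise. Then $$\sum_{i=0}^{f-1}p^{f-1-i}h_i\equiv\sum_{i=0}^{f-1}p^{f-1-i}(r_i-h_i)\pmod{p^f-1}$$ if and only if either: $(r_0,\dots,r_{f-1})\in\mathcal P$ and $J$ satisfies, for all $i$ (indices mod $f$): if $(r_{i-1},r_i)=(p,1)$ then ($i+1\in J\iff i\notin J$), and if $(r_{i-1},r_i)\in\{(1,p-1),(p-1,p-1)\}$ then ($i+1\in J\iff i\in J$); or else $p=2$, $(r_0,\dots,r_{f-1})=(2,\dots,2)$ and $J=\varnothing$ or $J=\{0,\dots,f-1\}$.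
   Context: $\mathcal P$ is the set of $f$-tuples $(r_0,\dots,r_{f-1})$ with every $r_i\in\{1,p-1,p\}$ such that, taking indices mod $f$ (so $r_f=r_0$): if $r_i=p$ then $r_{i+1}=1$, and if $r_i\in\{1,p-1\}$ then $r_{i+1}\in\{p-1,p\}$. *)

From mathcomp Require Import all_boot.
Set Implicit Arguments. Unset Strict Implicit. Unset Printing Implicit Defensive.

(* Indices are 'I_f; i+1 and i-1 modulo f are ordS i and ord_pred i. *)

Definition inP (p f : nat) (r : 'I_f -> nat) : Prop :=
  forall i : 'I_f,
    r i \in [:: 1; p.-1; p] /\
    (r i = p -> r (ordS i) = 1) /\
    (r i \in [:: 1; p.-1] -> r (ordS i) \in [:: p.-1; p]).

Definition hJ (f : nat) (r : 'I_f -> nat) (J : {set 'I_f}) (i : 'I_f) : nat :=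
  if i \in J then r i else 0.

Definition J_cond (p f : nat) (r : 'I_f -> nat) (J : {set 'I_f}) : Prop :=
  forall i : 'I_f,
    ((r (ord_pred i), r i) = (p, 1) -> ((ordS i \in J) <-> (i \notin J))) /\
    (((r (ord_pred i), r i) = (1, p.-1) \/ (r (ord_pred i), r i) = (p.-1, p.-1)) ->
       ((ordS i \in J) <-> (i \in J))).

(* Write d_i = r_i if i is in J and d_i = -r_i otherwise.  The congruence of
   the theorem says exactly that the base-p number with signed digits d_i is
   a multiple of p^f - 1.  Since p^f = 1 modulo p^f - 1, this holds iff the
   digits admit cyclic integer "carries" C_i with d_i = p C_i - C_(i+1)
   (indices mod f): one direction telescopes, the other takes C_i to be the
   defect of the first i digits.  Choosing i0 with |C_i0| maximal, the carry
   equation at i0 gives (p - 1) |C_i0| <= p, so either every carry lies in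
   {-1, 0, 1}, or p = 2 and |C_i0| = 2.  In the first case a purely local
   analysis of d_i = p C_i - C_(i+1) shows that r lies in P and J satisfies
   the stated parity rules; in the second case the carries are constant, all
   digits equal 2 and J is empty or full.  Conversely, such r and J come with
   explicit carries (C_i = 0 after a digit p, otherwise the sign of i in J). *)

From mathcomp Require Import all_boot all_algebra zify ring.
Import GRing.Theory.
Set Implicit Arguments. Unset Strict Implicit.
Local Open Scope ring_scope.

Lemma val_iter_ordS n (i : 'I_n) k : val (iter k (@ordS n) i) = ((i + k) %% n)%N.
Proof.
elim: k => [|k IH] /=; first by rewrite addn0 modn_small.
by rewrite IH -addn1 modnDml addn1 addnS.
Qed.

Lemma ordS_ind n (P : 'I_n -> Prop) (i : 'I_n) :
  P i -> (forall x, P x -> P (ordS x)) -> forall j, P j.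
Proof.
move=> Pi PS j.
have Piter k : P (iter k (@ordS n) i) by elim: k => //= k; apply: PS.
suff -> : j = iter (j + n - i) (@ordS n) i by [].
apply: val_inj; rewrite val_iter_ordS.
have ltin := ltn_ord i; have ltjn := ltn_ord j.
by rewrite (_ : (i + (j + n - i) = j + n)%N) ?modnDr ?modn_small //; lia.
Qed.

Definition signed_digit (f : nat) (r : 'I_f -> nat) (J : {set 'I_f}) (i : 'I_f) : int :=
  if i \in J then (r i)%:Z else - (r i)%:Z.

Lemma congr_iff_multiple (p n : nat) (r : 'I_n.+1 -> nat) (J : {set 'I_n.+1}) :
  (0 < p)%N ->
  ((\sum_(i < n.+1) p ^ (n - i) * hJ r J i
      = \sum_(i < n.+1) p ^ (n - i) * (r i - hJ r J i) %[mod p ^ n.+1 - 1])%N <->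
  exists q : int, \sum_(i < n.+1) (p ^ (n - i))%:Z * signed_digit r J i
                  = q * ((p ^ n.+1)%:Z - 1)).
Proof.
move=> p_gt0.
set A := (\sum_(i < n.+1) _)%N; set B := (\sum_(i < n.+1) _)%N.
have -> : \sum_(i < n.+1) (p ^ (n - i))%:Z * signed_digit r J i = A%:Z - B%:Z.
  rewrite /A /B !(big_morph Posz PoszD (erefl (Posz 0))) -sumrB.
  apply: eq_bigr => i _; rewrite /hJ /signed_digit.
  by case: (i \in J); rewrite ?subnn ?subn0 ?muln0 ?PoszM ?subr0 ?mulrN ?sub0r.
have modulus : Posz (p ^ n.+1 - 1) = (p ^ n.+1)%:Z - 1 by rewrite -subzn // expn_gt0 p_gt0.
have -> : (A = B %[mod p ^ n.+1 - 1])%N <-> (Posz (p ^ n.+1 - 1) %| A%:Z - B%:Z)%Z.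
  by rewrite -eqz_mod_dvd !modz_nat; split => [->|/eqP[]].
rewrite modulus; split => [/dvdzP[q Hq]|[q Hq]]; last apply/dvdzP; by exists q.
Qed.

Definition is_carry (p n : nat) (d C : 'I_n -> int) : Prop :=
  forall i, d i = p%:Z * C i - C (ordS i).

Section Telescoping.
Variables (p n : nat) (d : 'I_n.+1 -> int).

Definition prefix_value (k : nat) : int :=
  \sum_(j < k) (p ^ (k.-1 - j))%:Z * d (inord j).

Lemma prefix_value0 : prefix_value 0 = 0.
Proof. by rewrite /prefix_value big_ord0. Qed.

Lemma prefix_valueS k : prefix_value k.+1 = p%:Z * prefix_value k + d (inord k).
Proof.
rewrite /prefix_value big_ord_recr /= subnn expn0 mul1r; congr (_ + _).
rewrite mulr_sumr; apply: eq_bigr => -[j ltjk] _ /=.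
case: k ltjk => // k ltjk.
by rewrite [(k.+1 - j)%N]subSn // expnS PoszM mulrA.
Qed.

Lemma prefix_value_full :
  \sum_(i < n.+1) (p ^ (n - i))%:Z * d i = prefix_value n.+1.
Proof. by apply: eq_bigr => i _; rewrite inord_val. Qed.

Lemma ordS_inord k : (k < n)%N -> ordS (inord k : 'I_n.+1) = inord k.+1.
Proof. by move=> ltkn; apply: val_inj; rewrite /= !inordK ?modn_small //; lia. Qed.

Lemma ordS_last : ordS (inord n : 'I_n.+1) = ord0.
Proof. by apply: val_inj; rewrite /= inordK // modnn. Qed.

Lemma carries_of_multiple (q : int) :
  \sum_(i < n.+1) (p ^ (n - i))%:Z * d i = q * ((p ^ n.+1)%:Z - 1) ->
  is_carry p d (fun i => q * (p ^ i)%:Z - prefix_value i).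
Proof.
rewrite prefix_value_full prefix_valueS => Hq i.
have := prefix_valueS i; rewrite inord_val => Si.
have [ltin|] := ltnP i n.
  by rewrite -[i in ordS i]inord_val ordS_inord // inordK // Si expnS PoszM; ring.
move=> leni; have -> : i = inord n by apply: val_inj; rewrite /= inordK //; have := ltn_ord i; lia.
rewrite ordS_last /= inordK // prefix_value0 expn0.
rewrite expnS PoszM in Hq.
by apply: (addrI (p%:Z * prefix_value n)); rewrite Hq; ring.
Qed.

(* Conversely, carries telescope: S_k = C_0 p^k - C_k, and C_(n+1) = C_0. *)
Lemma multiple_of_carries (C : 'I_n.+1 -> int) :
  is_carry p d C ->
  \sum_(i < n.+1) (p ^ (n - i))%:Z * d i = C ord0 * ((p ^ n.+1)%:Z - 1).
Proof.
move=> HC.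
have prefix k : (k <= n)%N -> prefix_value k = C ord0 * (p ^ k)%:Z - C (inord k).
  elim: k => [|k IH] lekn.
    by rewrite prefix_value0 expn0 mulr1 (_ : inord 0 = ord0) ?subrr //; apply: val_inj; rewrite /= inordK.
  rewrite prefix_valueS IH 1?ltnW // HC ordS_inord // expnS PoszM; ring.
rewrite prefix_value_full prefix_valueS prefix // HC ordS_last expnS PoszM; ring.
Qed.

Lemma multiple_iff_carries :
  (exists q, \sum_(i < n.+1) (p ^ (n - i))%:Z * d i = q * ((p ^ n.+1)%:Z - 1)) <->
  (exists C, is_carry p d C).
Proof.
split=> [[q /carries_of_multiple]|[C /multiple_of_carries]]; last by exists (C ord0).
by exists (fun i => q * (p ^ i)%:Z - prefix_value i).
Qed.

End Telescoping.

Section CarryAnalysis.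
Variables (p n : nat) (r : 'I_n.+1 -> nat) (J : {set 'I_n.+1}).
Hypothesis p_gt1 : (1 < p)%N.
Hypothesis r_range : forall i, (1 <= r i <= p)%N.

Section GivenCarries.
Variable C : 'I_n.+1 -> int.
Hypothesis C_carry : is_carry p (signed_digit r J) C.

Lemma carry_eq i :
  (if i \in J then (r i)%:Z else - (r i)%:Z) = p%:Z * C i - C (ordS i).
Proof. exact: C_carry. Qed.

(* At an index i0 where |C| is maximal, p |C_i0| <= r_i0 + |C_(i0+1)| <= p + |C_i0|,
   so the carries are in {-1, 0, 1} unless p = 2 and max |C| = 2. *)
Lemma carries_small_or_two :
  (forall j, `|C j| <= 1)%N \/
  (p = 2 /\ exists i0, `|C i0| = 2 /\ forall j, `|C j| <= 2)%N.
Proof.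
pose i0 := [arg max_(i > ord0) `|C i|%N].
have C_max j : (`|C j| <= `|C i0|)%N.
  by rewrite /i0; case: arg_maxnP => // k _; apply.
have : (`|C i0| <= 1 \/ p = 2 /\ `|C i0| = 2)%N.
  have := carry_eq i0; have := C_max (ordS i0); have := r_range i0.
  by case: (i0 \in J) => h1 h2 h3; nia.
case=> [small|[p2 large]]; first by left=> j; apply: leq_trans (C_max j) _.
by right; split=> //; exists i0; split=> // j; rewrite -large.
Qed.

Section SmallCarries.
Hypothesis C_small : forall j, (`|C j| <= 1)%N.

Lemma digit_of_zero_carry i :
  C i = 0 -> [/\ r i = 1%N, C (ordS i) <> 0 & i \in J <-> C (ordS i) = -1].
Proof.
move=> Ci; have := carry_eq i; have := r_range i; have := C_small (ordS i).
rewrite Ci; case: (i \in J) => h1 h2 h3; split; lia.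
Qed.

(* A nonzero carry gives the sign of the digit; the digit is p if the next carry
   vanishes and p - 1 if the carry repeats (a sign change would need p + 1). *)
Lemma digit_of_nonzero_carry i :
  C i <> 0 -> (i \in J <-> C i = 1) /\
  (C (ordS i) = 0 /\ r i = p \/ C (ordS i) = C i /\ r i = p.-1).
Proof.
move=> Ci; have := carry_eq i; have := r_range i; have := C_small (ordS i).
have := C_small i; case: (i \in J) => h1 h2 h3 h4; split; nia.
Qed.

Lemma next_carry_zero i : C (ordS i) = 0 <-> r i = p.
Proof.
have [/eqP Ci|/eqP Ci] := boolP (C i == 0).
  by case: (digit_of_zero_carry Ci) => *; lia.
by case: (digit_of_nonzero_carry Ci) => _; lia.
Qed.

Lemma nonzero_next_carry i : r i <> p -> C (ordS i) <> 0.
Proof. by move=> rip /next_carry_zero. Qed.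

(* Small carries force r into P: a digit p (next carry 0) is followed by 1, and
   a digit 1 or p - 1 (next carry nonzero) is followed by p - 1 or p. *)
Lemma small_carries_inP : inP p r.
Proof.
move=> i; rewrite !inE; split; [|split].
- have [/eqP Ci|/eqP Ci] := boolP (C i == 0).
    by case: (digit_of_zero_carry Ci) => ->.
  by case: (digit_of_nonzero_carry Ci) => _ [[_ ->]|[_ ->]]; rewrite eqxx ?orbT.
- by move/next_carry_zero/digit_of_zero_carry => [].
- move=> rlow; have /nonzero_next_carry/digit_of_nonzero_carry[_] : r i <> p.
    by case/orP: rlow => /eqP ->; lia.
  by case=> -[_ ->]; rewrite eqxx ?orbT.
Qed.

(* Small carries force the parity rules on J: after (p, 1) the carry C_i is 0
   and J flips, after (1, p - 1) or (p - 1, p - 1) the carry repeats and J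
   is kept. *)
Lemma small_carries_J_cond : J_cond p r J.
Proof.
move=> i; have a_next : ordS (ord_pred i) = i := ord_predK i.
split.
- case=> ra ri.
  have Ci : C i = 0 by rewrite -a_next; apply/next_carry_zero.
  have [_ Cnext inJ] := digit_of_zero_carry Ci.
  have [inJnext _] := digit_of_nonzero_carry Cnext.
  have := C_small (ordS i); move: inJ inJnext.
  by case: (i \in J); case: (ordS i \in J) => /=; lia.
- move=> prev_cur; have [ra ri] : r (ord_pred i) <> p /\ r i = p.-1.
    by case: prev_cur => -[-> ->]; lia.
  have Ci := nonzero_next_carry ra; rewrite a_next in Ci.
  have Cnext : C (ordS i) <> 0 by apply: nonzero_next_carry; lia.
  have [inJ [[/Cnext [] _]|[Cnext_eq _]]] := digit_of_nonzero_carry Ci.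
  have [inJnext _] := digit_of_nonzero_carry Cnext.
  rewrite Cnext_eq in inJnext.
  by split=> [/inJnext/inJ|/inJ/inJnext].
Qed.

End SmallCarries.

Section LargeCarry.
Hypothesis p_eq2 : p = 2%N.
Variable i0 : 'I_n.+1.
Hypothesis C_i0 : `|C i0|%N = 2%N.
Hypothesis C_le2 : forall j, (`|C j| <= 2)%N.

(* A maximal carry +-2 propagates: 2 C_x - C_(x+1) is a digit of size <= 2. *)
Lemma large_carry_constant j : C j = C i0.
Proof.
apply: (@ordS_ind _ (fun j => C j = C i0) i0) => // x Cx.
have := carry_eq x; have := C_le2 (ordS x); have := r_range x.
by rewrite Cx p_eq2; case: (x \in J) => h1 h2 h3; lia.
Qed.

(* Then every d_i = C_i0 = +-2, so r_i = 2 and i is in J iff C_i0 = 2. *)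
Lemma large_carry_digit j : r j = 2%N /\ (j \in J <-> C i0 = 2).
Proof.
have := carry_eq j; have := r_range j.
rewrite (large_carry_constant j) (large_carry_constant (ordS j)) p_eq2.
by case: (j \in J) => h1 h2; lia.
Qed.

Lemma large_carry_exceptional : (forall i, r i = 2%N) /\ (J = set0 \/ J = setT).
Proof.
split=> [i|]; first by case: (large_carry_digit i).
have [C2|C2] : C i0 = 2 \/ C i0 = -2 by lia.
  by right; apply/setP => j; rewrite inE; apply/(large_carry_digit j).2.
left; apply/setP => j; rewrite inE; apply/negP => /(large_carry_digit j).2; lia.
Qed.

End LargeCarry.
End GivenCarries.

Lemma carries_of_P : inP p r -> J_cond p r J ->
  exists C, is_carry p (signed_digit r J) C.
Proof.
move=> rP rJ.
exists (fun i => if r (ord_pred i) == p then 0 else if i \in J then 1 else -1) => i.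
rewrite /signed_digit ordSK.
have [ra_in [ra_p ra_low]] := rP (ord_pred i); rewrite ord_predK in ra_p ra_low.
have [J_flip J_keep] := rJ i.
rewrite !inE in ra_in ra_low.
have [ra|ra] := eqVneq (r (ord_pred i)) p.
  have ri1 := ra_p ra.
  have : (ordS i \in J) <-> (i \notin J) by apply: J_flip; rewrite ra ri1.
  rewrite ri1 (_ : (1 == p)%N = false); last by apply/eqP; lia.
  by case: (i \in J); case: (ordS i \in J) => /=; lia.
have [rip|rip] := eqVneq (r i) p.
  by rewrite rip; case: (i \in J); lia.
have ra' : r (ord_pred i) = 1%N \/ r (ord_pred i) = p.-1 by lia.
have ri : r i = p.-1 by move: ra_low; lia.
have : (ordS i \in J) <-> (i \in J).
  by apply: J_keep; rewrite ri; case: ra' => ->; [left|right].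
by rewrite ri; case: (i \in J); case: (ordS i \in J) => /=; lia.
Qed.

Lemma carries_of_exceptional : p = 2%N -> (forall i, r i = 2%N) -> J = set0 \/ J = setT ->
  exists C, is_carry p (signed_digit r J) C.
Proof.
move=> p2 r2 [->|->]; [exists (fun=> -2) | exists (fun=> 2)] => i;
  by rewrite /signed_digit ?inE r2 p2.
Qed.

End CarryAnalysis.

Local Close Scope ring_scope.

Theorem mainTheorem10 (p f : nat) (r : 'I_f -> nat) (J : {set 'I_f}) :
  prime p -> 0 < f -> (forall i, 1 <= r i <= p) ->
  ((\sum_(i < f) p ^ (f.-1 - i) * hJ r J i
      = \sum_(i < f) p ^ (f.-1 - i) * (r i - hJ r J i) %[mod p ^ f - 1])
   <->
   ((inP p r /\ J_cond p r J) \/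
    (p = 2 /\ (forall i, r i = 2) /\ (J = set0 \/ J = setT)))).
Proof.
move=> p_prime; case: f r J => // n r J _ r_range.
have p_gt1 := prime_gt1 p_prime.
apply: iff_trans (congr_iff_multiple r J (ltnW p_gt1)) _.
apply: iff_trans (multiple_iff_carries p _) _.
split=> [[C C_carry]|].
  have [C_small|[p2 [i0 [C_i0 C_le2]]]] := carries_small_or_two p_gt1 r_range C_carry.
    left; split; first exact (small_carries_inP p_gt1 r_range C_carry C_small).
    exact (small_carries_J_cond p_gt1 r_range C_carry C_small).
  by right; split; last exact (large_carry_exceptional p_gt1 r_range C_carry p2 C_i0 C_le2).
case=> [[rP rJ]|[p2 [r2 J_ends]]]; first exact: carries_of_P p_gt1 rP rJ.
exact: carries_of_exceptional p2 r2 J_ends.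
Qed.
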